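(* Let $G$ be a subdivided $\Pi$-graph. Then every grain line $(L,\mathcal P)$ in $G$ is wild, i.e. $(L,\le_L)$ is order-isomorphic to $\mathbb{Q}\cap[0,1]$. In particular, in a subdivided $\Pi$-graph, every grain line can be chosen to be wildly presented: whenever $(L,(P_n)_{n\in\mathbb{N}})$ is an $x$–$y$ grain line in $G$, there is a subsequence $(P_{n_k})_{k\in\mathbb{N}}$ such that $(L,(P_{n_k})_{k\in\mathbb{N}})$ is a wildly presented $x$–$y$ grain line in $G$.
   Context: Graphs are simple and may be infinite; $\mathbb{N}=\{0,1,2,\dots\}$. A graph is infinitely edge-connected if it has at least two vertices and $G-E'$ is connected for every finite edge set $E'$. A $\Pi$-graph is an infinitely edge-connected graph that does not contain infinitely many internally vertex-disjoint paths between any two of its vertices. A subdivided $\Pi$-graph is a graph that is a subdivision of some $\Pi$-graph (each edge replaced by a path, new inner vertices added). An $x$–$y$ path $P$ induces the linear order $\le_P$ of traversal from $x$ to $y$ on $V(P)$. For distinct vertices $x,y$, an $x$–$y$ grain line in $G$ is a pair $(L,\mathcal P)$ where $L\subseteq V(G)$ is a countable set with a linear order $\le_L$ having least element $x$ and greatest element $y$, and $\mathcal P=(P_n)_{n\in\mathbb{N}}$ is a sequence of pairwise edge-disjoint $x$–$y$ paths in $G$, such that: (GL1) $L$ is exactly the set of vertices $v$ for which $\{n: v\in V(P_n)\}$ is a non-empty final segment $\{n:n\ge m\}$ of $\mathbb{N}$; (GL2) if a vertex of $P_n$ is not in $L$, it lies on no $P_m$ with $m\ne n$; (GL3) for every $n$,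 $\le_{P_n}$ and $\le_L$ induce the same linear order on $L_{<n}:=L\cap\bigcup_{k<n}V(P_k)$. A grain line is wild if $(L,\le_L)$ is order-isomorphic to $\mathbb{Q}\cap[0,1]$. It is wildly presented if for every $n$ and all $\ell_1<_L\ell_2$ in $L_{<n}$, the subpath $\ell_1P_n\ell_2$ of $P_n$ has a vertex in the open interval $(\ell_1,\ell_2)_L=\{\ell\in L:\ell_1<_L\ell<_L\ell_2\}$. *)

From HB Require Import structures.
From mathcomp Require Import all_boot all_order all_algebra.
From Stdlib Require List.
Set Implicit Arguments. Unset Strict Implicit. Unset Printing Implicit Defensive.
Import Order.TTheory GRing.Theory Num.Theory.

Record graph := Graph {
  vert :> Type;
  adj : vert -> vert -> Prop;
  adj_sym : forall u v, adj u v -> adj v u;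
  adj_irrefl : forall u, ~ adj u u }.

Section Paths.
Variable G : graph.

Definition pedge (P : list G) (a b : G) : Prop :=
  exists i, List.nth_error P i = Some a /\ List.nth_error P (S i) = Some b.

Definition is_path (P : list G) : Prop :=
  P <> nil /\ List.NoDup P /\ forall a b, pedge P a b -> adj a b.

Definition xy_path (x y : G) (P : list G) : Prop :=
  is_path P /\ List.nth_error P 0 = Some x
  /\ List.nth_error P (length P - 1) = Some y.

Definition path_le (P : list G) (u w : G) : Prop :=
  exists i j, (i <= j)%N /\ List.nth_error P i = Some u /\ List.nth_error P j = Some w.

Definition inner (x y : G) (P : list G) (z : G) : Prop :=
  List.In z P /\ z <> x /\ z <> y.

Definition avoids (E : list (G * G)) (P : list G) : Prop :=
  forall a b, pedge P a b -> ~ List.In (a, b) E /\ ~ List.In (b, a) E.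

Definition edge_disjoint (P Q : list G) : Prop :=
  forall a b, pedge P a b -> ~ pedge Q a b /\ ~ pedge Q b a.

Definition inf_edge_connected : Prop :=
  (exists u v : G, u <> v) /\
  forall (E : list (G * G)) (u v : G), exists P, xy_path u v P /\ avoids E P.

Definition inf_indep_paths (x y : G) : Prop :=
  exists Q : nat -> list G,
    (forall i, xy_path x y (Q i)) /\
    (forall i j, i <> j -> Q i <> Q j) /\
    (forall i j z, i <> j -> inner x y (Q i) z -> ~ List.In z (Q j)).

Definition Pi_graph : Prop :=
  inf_edge_connected /\ forall x y : G, x <> y -> ~ inf_indep_paths x y.

End Paths.

(* G is a subdivision of H: branch vertices f, and every edge uv of H is
   replaced by an f u – f v path R u v; these paths have inner vertices
   outside the branch set, pairwise disjoint interiors, and together they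
   make up all of G (vertices and edges). *)
Definition subdivision_of (G H : graph) : Prop :=
  exists (f : H -> G) (R : H -> H -> list G),
    (forall u v, f u = f v -> u = v) /\
    (forall u v, adj u v -> xy_path (f u) (f v) (R u v)) /\
    (forall u v, adj u v -> R v u = List.rev (R u v)) /\
    (forall u v z w, adj u v -> inner (f u) (f v) (R u v) z -> z <> f w) /\
    (forall u v u' v' z, adj u v -> adj u' v' ->
        inner (f u) (f v) (R u v) z -> inner (f u') (f v') (R u' v') z ->
        (u' = u /\ v' = v) \/ (u' = v /\ v' = u)) /\
    (forall z : G, (exists w, z = f w) \/
        exists u v, adj u v /\ inner (f u) (f v) (R u v) z) /\
    (forall a b : G, adj a b -> exists u v, adj u v /\ pedge (R u v) a b).

Definition subdivided_Pi_graph (G : graph) : Prop :=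
  exists H : graph, Pi_graph H /\ subdivision_of G H.

Section GrainLines.
Variable G : graph.

Definition L_lt (L : G -> Prop) (P : nat -> list G) (n : nat) (v : G) : Prop :=
  L v /\ exists k, (k < n)%N /\ List.In v (P k).

Definition grain_line (x y : G) (L : G -> Prop) (le : G -> G -> Prop)
    (P : nat -> list G) : Prop :=
  x <> y /\
  (exists g : G -> nat, forall u v, L u -> L v -> g u = g v -> u = v) /\
  (forall u, L u -> le u u) /\
  (forall u v, L u -> L v -> le u v -> le v u -> u = v) /\
  (forall u v w, L u -> L v -> L w -> le u v -> le v w -> le u w) /\
  (forall u v, L u -> L v -> le u v \/ le v u) /\
  L x /\ L y /\ (forall v, L v -> le x v /\ le v y) /\
  (forall n, xy_path x y (P n)) /\
  (forall n m, n <> m -> edge_disjoint (P n) (P m)) /\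
  (forall v, L v <-> exists m, forall n, List.In v (P n) <-> (m <= n)%N) /\
  (forall n v, List.In v (P n) -> ~ L v -> forall m, m <> n -> ~ List.In v (P m)) /\
  (forall n u w, L_lt L P n u -> L_lt L P n w -> (le u w <-> path_le (P n) u w)).

Definition wild (L : G -> Prop) (le : G -> G -> Prop) : Prop :=
  exists f : G -> rat,
    (forall v, L v -> (0 <= f v)%R /\ (f v <= 1)%R) /\
    (forall q : rat, (0 <= q)%R -> (q <= 1)%R -> exists v, L v /\ f v = q) /\
    (forall u w, L u -> L w -> (le u w <-> (f u <= f w)%R)).

Definition wildly_presented (L : G -> Prop) (le : G -> G -> Prop)
    (P : nat -> list G) : Prop :=
  forall n l1 l2, L_lt L P n l1 -> L_lt L P n l2 -> le l1 l2 -> l1 <> l2 ->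
    exists l, path_le (P n) l1 l /\ path_le (P n) l l2 /\
              L l /\ le l1 l /\ l1 <> l /\ le l l2 /\ l <> l2.

End GrainLines.

(* The heart of the matter is that (L, <=_L) is dense.  If l1 <_L l2 had no
   point of L strictly between them, then for all large N the segments
   l1 P_N l2 would be pairwise edge-disjoint, because the P_N are, and
   internally disjoint: a common inner vertex lies on two of the paths, hence in
   L by (GL2), hence strictly between l1 and l2 by (GL3).  A subdivided Pi-graph
   has no such family of paths: its ends must be branch vertices, since a
   subdividing vertex has only two neighbours, and contracting the subdivided
   edges turns it into infinitely many independent paths of the Pi-graph.
   Being countable, dense and bounded by x <> y, (L, <=_L) is isomorphic to
   Q ∩ [0,1] by Cantor's back-and-forth argument.  Density also yields the
   subsequence greedily: each path is chosen so late that it exhibits a point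
   of L strictly between any two points of L lying on the paths chosen so far. *)

From mathcomp Require Import all_boot all_order all_algebra zify.
From Stdlib Require Import Lia Classical ClassicalEpsilon.
(* Imported last because MathComp's [path] also defines a [path_le]. *)
Set Implicit Arguments. Unset Strict Implicit. Unset Printing Implicit Defensive.
Import Order.TTheory GRing.Theory Num.Theory.

(* [++] denotes MathComp's [cat], while the definitions use [List.app]. *)
Notation "a +++ b" := (List.app a b) (at level 60, right associativity).

Definition linear_order (T : Type) (D : T -> Prop) (le : T -> T -> Prop) :=
  (forall u, D u -> le u u) /\
  (forall u v, D u -> D v -> le u v -> le v u -> u = v) /\
  (forall u v w, D u -> D v -> D w -> le u v -> le v w -> le u w) /\
  (forall u v, D u -> D v -> le u v \/ le v u).

Definition dense_order (T : Type) (D : T -> Prop) (le : T -> T -> Prop) :=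
  forall a b, D a -> D b -> le a b -> a <> b ->
    exists c, D c /\ le a c /\ a <> c /\ le c b /\ c <> b.

Lemma linear_order_dual (T : Type) (D : T -> Prop) (le : T -> T -> Prop) :
  linear_order D le -> linear_order D (fun u v => le v u).
Proof.
move=> [refl [anti [trans tot]]]; split; [exact: refl | split; [|split]].
- by move=> u v Du Dv vu uv; apply: anti.
- by move=> u v w Du Dv Dw vu wv; apply: (trans w v u).
- by move=> u v Du Dv; case: (tot u v Du Dv); auto.
Qed.

Lemma list_max_exists (X T : Type) (k : X -> T) (D : T -> Prop) (le : T -> T -> Prop)
    (Q : X -> Prop) (l : list X) :
  linear_order D le -> (forall t, List.In t l -> Q t -> D (k t)) ->
  (exists t, List.In t l /\ Q t) ->
  exists m, List.In m l /\ Q m /\ forall t, List.In t l -> Q t -> le (k t) (k m).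
Proof.
move=> [refl [_ [trans tot]]].
elim: l => [|a l IH] Dk [t [Ht Qt]]; first by case: Ht.
have Dkl : forall t, List.In t l -> Q t -> D (k t) by move=> t' Ht'; apply: Dk; right.
case: (classic (exists t, List.In t l /\ Q t)) => [/(IH Dkl) [m [Hm [Qm Mm]]]|Nl].
- have Dkm : D (k m) by apply: Dk; [right|].
  case: (classic (Q a)) => [Qa|NQa]; last first.
    by exists m; split; [right|split] => // t' [<-|Ht'] //; apply: Mm.
  have Dka : D (k a) by apply: Dk; [left|].
  case: (tot _ _ Dka Dkm) => [am|ma].
  + by exists m; split; [right|split] => // t' [<-|Ht'] //; apply: Mm.
  + exists a; split; [left|split] => // t' [<-|Ht'] Qt'; first exact: refl Dka.
    by apply: (trans _ (k m)) => //; [apply: Dk; [right|] | apply: Mm].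
- case: Ht => [Eat|Ht]; last by case: Nl; exists t.
  subst t; exists a; split; [left|split] => // t' [<-|Ht'] Qt'.
    by apply: refl; apply: Dk; [left|].
  by case: Nl; exists t'.
Qed.

Definition partial_iso (A B : Type) (DA : A -> Prop) (leA : A -> A -> Prop)
    (DB : B -> Prop) (leB : B -> B -> Prop) (s : list (A * B)) :=
  (forall p, List.In p s -> DA p.1 /\ DB p.2) /\
  (forall p q, List.In p s -> List.In q s -> (leA p.1 q.1 <-> leB p.2 q.2)).

Definition swap_pairs (A B : Type) (s : list (A * B)) : list (B * A) :=
  List.map (fun p => (p.2, p.1)) s.

Lemma swap_pairsK (A B : Type) (s : list (A * B)) : swap_pairs (swap_pairs s) = s.
Proof. by rewrite /swap_pairs List.map_map; elim: s => [|[a b] s /= ->]. Qed.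

Lemma In_swap_pairs (A B : Type) (s : list (A * B)) a b :
  List.In (a, b) s -> List.In (b, a) (swap_pairs s).
Proof. by move=> H; apply/List.in_map_iff; exists (a, b). Qed.

Lemma partial_iso_swap (A B : Type) (DA : A -> Prop) (leA : A -> A -> Prop)
    (DB : B -> Prop) (leB : B -> B -> Prop) s :
  partial_iso DA leA DB leB s -> partial_iso DB leB DA leA (swap_pairs s).
Proof.
move=> [Ds iso]; split.
- by move=> q /List.in_map_iff [p [<- Hp]] /=; have [] := Ds _ Hp.
- move=> q r /List.in_map_iff [p [<- Hp]] /List.in_map_iff [p' [<- Hp']] /=.
  by rewrite (iso _ _ Hp Hp').
Qed.

Section PartialIsoExtension.
Variables (A B : Type) (DA : A -> Prop) (leA : A -> A -> Prop)
  (DB : B -> Prop) (leB : B -> B -> Prop).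
Hypotheses (linA : linear_order DA leA) (linB : linear_order DB leB).

Lemma partial_iso_cons s a b : partial_iso DA leA DB leB s -> DA a -> DB b ->
  (forall p, List.In p s -> (leA a p.1 <-> leB b p.2) /\ (leA p.1 a <-> leB p.2 b)) ->
  partial_iso DA leA DB leB ((a, b) :: s).
Proof.
move=> [Ds iso] Da Db Hab; split.
- by move=> p [<-|Hp]; [split | apply: Ds].
- have [reflA _] := linA; have [reflB _] := linB.
  move=> p q [<-|Hp] [<-|Hq] /=; last exact: iso.
  + by split=> _; [apply: reflB | apply: reflA].
  + exact: (proj1 (Hab _ Hq)).
  + exact: (proj2 (Hab _ Hp)).
Qed.

Hypothesis denseB : dense_order DB leB.
Variables (xa ya : A) (xb yb : B).
Hypothesis boundsA : forall a, DA a -> leA xa a /\ leA a ya.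

(* The image of a new point is taken strictly between the images of its
   nearest neighbours in the domain of [s]; the endpoints guarantee that
   both neighbours exist. *)
Lemma partial_iso_extend s a : partial_iso DA leA DB leB s ->
  List.In (xa, xb) s -> List.In (ya, yb) s -> DA a ->
  exists b, partial_iso DA leA DB leB ((a, b) :: s).
Proof.
move=> Hs Hx Hy Da; have [Ds iso] := Hs.
case: (classic (exists b, List.In (a, b) s)) => [[b Hb]|Nb].
  exists b; apply: partial_iso_cons => //; first exact: (proj2 (Ds _ Hb)).
  by move=> p Hp; split; [exact: (iso (a, b) p) | exact: (iso p (a, b))].
have [reflA [antiA [transA totA]]] := linA; have [_ [antiB [transB _]]] := linB.
have Nap : forall p, List.In p s -> p.1 <> a.
  by move=> [a' b'] Hp /= E; apply: Nb; exists b'; rewrite -E.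
have [lo [Hlo [lo_a lo_max]]] := list_max_exists (k := snd) (Q := fun p => leA p.1 a) linB
  (fun t Ht _ => proj2 (Ds t Ht)) (ex_intro _ _ (conj Hx (proj1 (boundsA Da)))).
have [hi [Hhi [a_hi hi_min]]] := list_max_exists (k := snd) (Q := fun p => leA a p.1)
  (linear_order_dual linB) (fun t Ht _ => proj2 (Ds t Ht))
  (ex_intro _ _ (conj Hy (proj2 (boundsA Da)))).
have [DAlo DBlo] := Ds _ Hlo; have [DAhi DBhi] := Ds _ Hhi.
have lo_hi : leB lo.2 hi.2 by apply/(iso _ _ Hlo Hhi); apply: (transA _ a).
have Nlo_hi : lo.2 <> hi.2.
  move=> E; apply: (Nap _ Hlo); apply: antiA => //; apply: (transA _ hi.1) => //.
  by apply/(iso _ _ Hhi Hlo); rewrite E; apply: (proj1 linB).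
have [c [Dc [lo_c [Nlo_c [c_hi Nc_hi]]]]] := denseB DBlo DBhi lo_hi Nlo_hi.
exists c; apply: partial_iso_cons => // p Hp; have [DAp DBp] := Ds _ Hp.
case: (totA _ _ DAp Da) => [pa|ap].
- have pc : leB p.2 c by apply: (transB _ lo.2) => //; apply: lo_max.
  split; split=> // H.
  + by case: (Nap _ Hp); apply: antiA.
  + by case: Nlo_c; apply: antiB => //; apply: (transB _ p.2) => //; apply: lo_max.
- have cp : leB c p.2 by apply: (transB _ hi.2) => //; apply: hi_min.
  split; split=> // H.
  + by case: (Nap _ Hp); apply: antiA.
  + by case: Nc_hi; apply: antiB => //; apply: (transB _ p.2) => //; apply: hi_min.
Qed.

End PartialIsoExtension.

Section BackAndForth.
Variables (A B : Type) (DA : A -> Prop) (leA : A -> A -> Prop)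
  (DB : B -> Prop) (leB : B -> B -> Prop).
Hypotheses (linA : linear_order DA leA) (linB : linear_order DB leB)
  (denseA : dense_order DA leA) (denseB : dense_order DB leB).
Variables (xa ya : A) (xb yb : B).
Hypotheses (DAx : DA xa) (DAy : DA ya) (DBx : DB xb) (DBy : DB yb)
  (boundsA : forall a, DA a -> leA xa a /\ leA a ya)
  (boundsB : forall b, DB b -> leB xb b /\ leB b yb)
  (Nxya : xa <> ya) (Nxyb : xb <> yb).
Variables (codeA : A -> nat) (codeB : B -> nat).
Hypotheses (codeA_inj : forall u v, DA u -> DA v -> codeA u = codeA v -> u = v)
  (codeB_inj : forall u v, DB u -> DB v -> codeB u = codeB v -> u = v).

Definition anchored s :=
  partial_iso DA leA DB leB s /\ List.In (xa, xb) s /\ List.In (ya, yb) s.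

Lemma anchored_endpoints : anchored [:: (xa, xb); (ya, yb)].
Proof.
have [reflA [antiA _]] := linA; have [reflB [antiB _]] := linB.
split; last by split; [left | right; left].
split; first by move=> p [<-|[<-|[]]]; split.
move=> p q [<-|[<-|[]]] [<-|[<-|[]]] /=; split=> H //.
- exact: reflB.
- exact: reflA.
- exact: (proj1 (boundsB DBy)).
- exact: (proj1 (boundsA DAy)).
- by case: Nxya; apply: antiA => //; apply: (proj1 (boundsA DAy)).
- by case: Nxyb; apply: antiB => //; apply: (proj1 (boundsB DBy)).
- exact: reflB.
- exact: reflA.
Qed.

Lemma anchored_extend_left s a : anchored s -> DA a -> exists b, anchored ((a, b) :: s).
Proof.
move=> [Hs [Hx Hy]] Da; have [b Hb] := partial_iso_extend linA linB denseB boundsA Hs Hx Hy Da.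
by exists b; split=> //; split; right.
Qed.

Lemma anchored_extend_right s b : anchored s -> DB b -> exists a, anchored ((a, b) :: s).
Proof.
move=> [Hs [Hx Hy]] Db.
have [a Ha] := partial_iso_extend linB linA denseA boundsB (partial_iso_swap Hs)
  (In_swap_pairs Hx) (In_swap_pairs Hy) Db.
exists a; split; last by split; right.
by have := partial_iso_swap Ha; rewrite /= swap_pairsK.
Qed.

Definition covers_code s n :=
  (forall a, DA a -> codeA a = n -> exists b, List.In (a, b) s) /\
  (forall b, DB b -> codeB b = n -> exists a, List.In (a, b) s).

Lemma anchored_cover s n : anchored s ->
  exists s', anchored s' /\ List.incl s s' /\ covers_code s' n.
Proof.
move=> Hs.
have [s1 [Hs1 [ss1 cover1]]] : exists s1, anchored s1 /\ List.incl s s1 /\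
    forall a, DA a -> codeA a = n -> exists b, List.In (a, b) s1.
  case: (classic (exists a, DA a /\ codeA a = n)) => [[a [Da Ea]]|Nn].
  - have [b Hb] := anchored_extend_left Hs Da.
    exists ((a, b) :: s); split=> //; split; first by move=> p; right.
    move=> a' Da' Ea'; exists b; left; congr pair; apply: codeA_inj => //; congruence.
  - by exists s; split=> //; split=> // a Da Ea; case: Nn; exists a.
have [s2 [Hs2 [s1s2 cover2]]] : exists s2, anchored s2 /\ List.incl s1 s2 /\
    forall b, DB b -> codeB b = n -> exists a, List.In (a, b) s2.
  case: (classic (exists b, DB b /\ codeB b = n)) => [[b [Db Eb]]|Nn].
  - have [a Ha] := anchored_extend_right Hs1 Db.
    exists ((a, b) :: s1); split=> //; split; first by move=> p; right.
    move=> b' Db' Eb'; exists a; left; congr pair; apply: codeB_inj => //; congruence.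
  - by exists s1; split=> //; split=> // b Db Eb; case: Nn; exists b.
exists s2; split=> //; split; first exact: List.incl_tran s1s2.
split=> // a Da Ea; have [b Hb] := cover1 a Da Ea; exists b; exact: s1s2.
Qed.

Definition bf_step s n : list (A * B) :=
  epsilon (inhabits s) (fun s' => anchored s' /\ List.incl s s' /\ covers_code s' n).

Fixpoint bf_chain n : list (A * B) :=
  if n is n'.+1 then bf_step (bf_chain n') n' else [:: (xa, xb); (ya, yb)].

Lemma bf_step_spec s n : anchored s ->
  anchored (bf_step s n) /\ List.incl s (bf_step s n) /\ covers_code (bf_step s n) n.
Proof.
by move=> Hs; apply: (epsilon_spec (inhabits s)
  (fun s' => anchored s' /\ List.incl s s' /\ covers_code s' n)); apply: anchored_cover.
Qed.

Lemma bf_chain_anchored n : anchored (bf_chain n).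
Proof. by elim: n => [|n IH]; [exact: anchored_endpoints | case: (bf_step_spec n IH)]. Qed.

Lemma bf_chain_covers n : covers_code (bf_chain n.+1) n.
Proof. by have [_ []] := bf_step_spec n (bf_chain_anchored n). Qed.

Lemma bf_chain_incl n m : (n <= m)%N -> List.incl (bf_chain n) (bf_chain m).
Proof.
move=> /ssrnat.leP; elim=> [|k _ IH]; first exact: List.incl_refl.
by apply: List.incl_tran IH _; have [_ []] := bf_step_spec k (bf_chain_anchored k).
Qed.

Lemma bf_chain_iso n m p q : List.In p (bf_chain n) -> List.In q (bf_chain m) ->
  DA p.1 /\ DB p.2 /\ (leA p.1 q.1 <-> leB p.2 q.2).
Proof.
move=> Hp Hq; have [[Ds iso] _] := bf_chain_anchored (maxn n m).
have Hp' := bf_chain_incl (leq_maxl n m) Hp; have Hq' := bf_chain_incl (leq_maxr n m) Hq.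
by have [? ?] := Ds _ Hp'; split=> //; split=> //; apply: iso.
Qed.

Definition bf_map (a : A) : B :=
  epsilon (inhabits xb) (fun b => exists n, List.In (a, b) (bf_chain n)).

Lemma bf_map_spec a : DA a -> exists n, List.In (a, bf_map a) (bf_chain n).
Proof.
move=> Da; apply: (epsilon_spec (inhabits xb) (fun b => exists n, List.In (a, b) (bf_chain n))).
have [b Hb] := (bf_chain_covers (codeA a)).1 a Da erefl.
by exists b, (codeA a).+1.
Qed.

Theorem countable_dense_order_iso : exists f : A -> B,
  (forall a, DA a -> DB (f a)) /\
  (forall b, DB b -> exists a, DA a /\ f a = b) /\
  (forall u w, DA u -> DA w -> (leA u w <-> leB (f u) (f w))).
Proof.
exists bf_map; split; [|split].
- by move=> a Da; have [n Hn] := bf_map_spec Da; have [_ []] := bf_chain_iso Hn Hn.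
- move=> b Db; have [a Hab] := (bf_chain_covers (codeB b)).2 b Db erefl.
  have [Da _] := bf_chain_iso Hab Hab; have [m Hm] := bf_map_spec Da.
  exists a; split=> //; have [reflA _] := linA; have [_ [antiB _]] := linB.
  have [_ [Dfa fa_b]] := bf_chain_iso Hm Hab; have [_ [Db' b_fa]] := bf_chain_iso Hab Hm.
  by apply: antiB => //; [apply/fa_b | apply/b_fa]; apply: reflA.
- move=> u w Du Dw; have [n Hn] := bf_map_spec Du; have [m Hm] := bf_map_spec Dw.
  by have [_ []] := bf_chain_iso Hn Hm.
Qed.

End BackAndForth.

Section ListFacts.
Variable T : Type.
Implicit Types (X Y Z l t : list T) (a b y : T).

Lemma nth_error_mid X a Y : List.nth_error (X +++ a :: Y) (length X) = Some a.
Proof. by elim: X. Qed.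

Lemma nth_error_app_length X Y k :
  List.nth_error (X +++ Y) (length X + k) = List.nth_error Y k.
Proof. by elim: X => //= a X IH; rewrite addSn. Qed.

Lemma nth_error_head l a : List.nth_error l 0 = Some a <-> exists t, l = a :: t.
Proof. by split; [case: l => //= b t [->]; exists t | move=> [t ->]]. Qed.

Lemma nth_error_last_app l y :
  List.nth_error l (length l - 1) = Some y <-> exists X, l = X +++ [:: y].
Proof.
split; last first.
  move=> [X ->]; rewrite List.length_app /=.
  have -> : length X + 1 - 1 = length X by lia.
  exact: nth_error_mid.
move=> H; have [X [Z [E HX]]] := List.nth_error_split l _ H.
have HZ : length Z = 0.
  by have := f_equal (@length T) E; rewrite List.length_app /=; lia.
by case: Z HZ E => // _ ->; exists X.
Qed.

Lemma nth_error_last_cons a t y :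
  List.nth_error (a :: t) (length (a :: t) - 1) = Some y <-> last a t = y.
Proof.
rewrite /= subn1 /=; elim: t a => [|b t IH] a /=; last exact: IH.
by split=> [[]|->].
Qed.

Lemma In_last a t : List.In (last a t) (a :: t).
Proof. by elim: t a => [|b t IH] a /=; [left | right; apply: IH]. Qed.

Lemma NoDup_app_cons_inj X Y X' Y' a :
  List.NoDup (X +++ a :: Y) -> X +++ a :: Y = X' +++ a :: Y' -> X = X' /\ Y = Y'.
Proof.
have notin Z W : List.NoDup (a :: Z +++ a :: W) -> False.
  by move/List.NoDup_cons_iff=> [+ _]; apply; apply: List.in_or_app; right; left.
elim: X X' => [|x X IH] [|x' X'] /=.
- by move=> _ [->].
- by move=> ND [E1 E2]; subst x'; move: ND; rewrite E2 => /notin.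
- by move=> ND [E1 E2]; subst x; move/notin: ND.
- move=> /List.NoDup_cons_iff [_ ND] [-> E2].
  by have [-> ->] := IH X' ND E2.
Qed.

End ListFacts.

Lemma eventually_all (T : Type) (l : list T) (Q : T -> nat -> Prop) :
  (forall t, List.In t l -> exists N0, forall N, (N0 <= N)%N -> Q t N) ->
  exists N0, forall N, (N0 <= N)%N -> forall t, List.In t l -> Q t N.
Proof.
elim: l => [|a l IH] H; first by exists 0.
have [Na Ha] := H a (or_introl erefl).
have [Nl Hl] := IH (fun t Ht => H t (or_intror Ht)).
exists (maxn Na Nl) => N HN t [<-|Ht]; [apply: Ha | apply: Hl] => //; lia.
Qed.

Section Walks.
Variable G : graph.
Implicit Types (X Y Z l : list G) (u v w a b z : G).

Definition walk l := forall a b, pedge l a b -> adj a b.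

Lemma pedge_split l u v : pedge l u v <-> exists X Y, l = X +++ u :: v :: Y.
Proof.
split; last first.
  move=> [X [Y ->]]; exists (length X); split; first exact: nth_error_mid.
  by rewrite -addn1 nth_error_app_length.
move=> [i [Hu Hv]]; have [X [Z [E HX]]] := List.nth_error_split l i Hu.
move: Hv; rewrite E -HX -addn1 nth_error_app_length.
by case: Z E => [|z Z] //= E [<-]; exists X, Z.
Qed.

Lemma pedge_In l u v : pedge l u v -> List.In u l /\ List.In v l.
Proof.
move/pedge_split=> [X [Y ->]].
by split; apply: List.in_or_app; right; [left | right; left].
Qed.

Lemma pedge_app l u v X Y : pedge l u v -> pedge (X +++ l +++ Y) u v.
Proof.
move/pedge_split=> [X' [Y' ->]]; apply/pedge_split; exists (X +++ X'), (Y' +++ Y).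
by rewrite -!List.app_assoc.
Qed.

Lemma pedge_rev l u v : pedge (List.rev l) u v <-> pedge l v u.
Proof.
have rev_pedge l' u' v' : pedge l' v' u' -> pedge (List.rev l') u' v'.
  move/pedge_split=> [X [Y ->]]; apply/pedge_split; exists (List.rev Y), (List.rev X).
  by rewrite List.rev_app_distr /= -!List.app_assoc.
by split=> [/rev_pedge|]; [rewrite List.rev_involutive | apply: rev_pedge].
Qed.

Lemma pedge_cons2 a b l u v :
  pedge (a :: b :: l) u v <-> (u = a /\ v = b) \/ pedge (b :: l) u v.
Proof.
split; last by move=> [[-> ->]|[i H]]; [exists 0 | exists i.+1].
by move=> [[|i] [Hu Hv]]; [move: Hu Hv => [<-] [<-]; left | right; exists i].
Qed.

Lemma NoDup_pedge_next l v a b : List.NoDup l -> pedge l v a -> pedge l v b -> a = b.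
Proof.
move=> ND /pedge_split [X [Y El]] /pedge_split [X' [Y' El']].
rewrite El in ND; rewrite El in El'.
by have [_ [->]] := NoDup_app_cons_inj ND El'.
Qed.

Lemma NoDup_pedge_prev l v a b : List.NoDup l -> pedge l a v -> pedge l b v -> a = b.
Proof.
move=> /List.NoDup_rev ND /pedge_rev Ha /pedge_rev Hb; exact: NoDup_pedge_next ND Ha Hb.
Qed.

Lemma NoDup_pedge_head a t z : List.NoDup (a :: t) ->
  pedge (a :: t) a z \/ pedge (a :: t) z a -> exists Y, t = z :: Y.
Proof.
move=> ND [] /pedge_split [X [Y E]].
- rewrite E in ND; have [_ Et] := NoDup_app_cons_inj (X' := [::]) ND (esym E).
  by exists Y; rewrite -Et.
- move: E; rewrite -[z :: a :: Y]/([:: z] +++ a :: Y) List.app_assoc => E.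
  rewrite E in ND.
  by have [/List.app_eq_nil [_ //] _] := NoDup_app_cons_inj (X' := [::]) ND (esym E).
Qed.

Lemma NoDup_degree2 l v a b c : List.NoDup l ->
  pedge l v a \/ pedge l a v -> pedge l v b \/ pedge l b v ->
  pedge l v c \/ pedge l c v -> a = b \/ a = c \/ b = c.
Proof.
move=> ND [Ha|Ha] [Hb|Hb] [Hc|Hc];
  first [ by left; apply: NoDup_pedge_next Ha Hb | by left; apply: NoDup_pedge_prev Ha Hb
        | by right; left; apply: NoDup_pedge_next Ha Hc
        | by right; left; apply: NoDup_pedge_prev Ha Hc
        | by right; right; apply: NoDup_pedge_next Hb Hc
        | by right; right; apply: NoDup_pedge_prev Hb Hc ].
Qed.

Lemma path_le_app X u Y w Z : path_le (X +++ u :: Y +++ w :: Z) u w.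
Proof.
exists (length X), (length X + (length Y).+1); split; first exact: leq_addr.
split; first exact: nth_error_mid.
by rewrite nth_error_app_length /= nth_error_mid.
Qed.

Lemma path_le_split l u w : List.NoDup l -> u <> w -> path_le l u w ->
  exists X Y Z, l = X +++ u :: Y +++ w :: Z.
Proof.
move=> ND Nuw [i [j [ij [Hi Hj]]]].
have [X [Z' [El HX]]] := List.nth_error_split l i Hi.
have Nij : i <> j by move=> E; subst j; move: Hj; rewrite Hi => -[].
move: Hj; rewrite El.
have -> : j = length X + (j - length X - 1).+1 by lia.
rewrite nth_error_app_length /= => Hj.
by have [Y [Z [-> _]]] := List.nth_error_split Z' _ Hj; exists X, Y, Z.
Qed.

Lemma path_le_In l u w : path_le l u w -> List.In u l /\ List.In w l.
Proof.
by move=> [i [j [_ [Hi Hj]]]]; split; apply: List.nth_error_In; [exact: Hi | exact: Hj].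
Qed.

Lemma walk_cons2 a b l : walk (a :: b :: l) <-> adj a b /\ walk (b :: l).
Proof.
split=> [W|[ab W] u v /pedge_cons2 [[-> ->]|] //]; last exact: W.
by split=> [|u v Huv]; apply: W; apply/pedge_cons2; [left | right].
Qed.

Lemma walk_short l : (length l <= 1)%N -> walk l.
Proof. by case: l => [|a [|b l]] // _ u v [[|i] [Hu Hv]]. Qed.

Lemma xy_path_cons2 x y l : xy_path x y l -> x <> y ->
  exists z t, l = x :: z :: t /\ last z t = y.
Proof.
move=> [_ [/nth_error_head [[|z t] El] Hl]] Nxy; subst l.
  by case: Nxy; case: Hl.
by exists z, t; split=> //; move/nth_error_last_cons: Hl.
Qed.

Lemma xy_path_rev x y l : xy_path x y l -> xy_path y x (List.rev l).
Proof.
move=> [[Nl [ND W]] [/nth_error_head [t Et] /nth_error_last_app [X EX]]].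
split; [split; [|split] | split].
- by move/(f_equal (@List.rev G)); rewrite List.rev_involutive.
- exact: List.NoDup_rev.
- by move=> a b /pedge_rev Hab; apply: adj_sym; apply: W.
- by apply/nth_error_head; exists (List.rev X); rewrite EX List.rev_app_distr.
- by apply/nth_error_last_app; exists (List.rev t); rewrite Et.
Qed.

Lemma adj_endpoints (u v a b : G) : adj u v ->
  a = u \/ a = v -> b = u \/ b = v -> a <> b -> adj a b.
Proof. by move=> uv [->|->] [->|->] Nab //; apply: adj_sym. Qed.

End Walks.

Definition disjoint_path_family (G : graph) (l1 l2 : G) (S : nat -> list G) :=
  (forall i, xy_path l1 l2 (S i)) /\
  (forall i j, i <> j -> edge_disjoint (S i) (S j)) /\
  (forall i j v, i <> j -> inner l1 l2 (S i) v -> ~ inner l1 l2 (S j) v).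

Lemma disjoint_path_family_rev (G : graph) (l1 l2 : G) S :
  disjoint_path_family l1 l2 S -> disjoint_path_family l2 l1 (fun i => List.rev (S i)).
Proof.
move=> [paths [edisj idisj]]; split; [|split].
- by move=> i; apply: xy_path_rev.
- move=> i j Nij a b /pedge_rev Hab; have [Nab Nba] := edisj i j Nij _ _ Hab.
  by split=> /pedge_rev.
- move=> i j v Nij [Hi [Hi1 Hi2]] [Hj [Hj1 Hj2]].
  by apply: (idisj i j v Nij); (split; [apply/List.in_rev | split]).
Qed.

Section Subdivision.
Variables (G H : graph) (f : H -> G) (R : H -> H -> list G).
Hypotheses
  (f_inj : forall u v, f u = f v -> u = v)
  (R_path : forall u v, adj u v -> xy_path (f u) (f v) (R u v))
  (R_rev : forall u v, adj u v -> R v u = List.rev (R u v))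
  (R_inner_nonbranch : forall u v z w, adj u v -> inner (f u) (f v) (R u v) z -> z <> f w)
  (R_inner_unique : forall u v u' v' z, adj u v -> adj u' v' ->
     inner (f u) (f v) (R u v) z -> inner (f u') (f v') (R u' v') z ->
     (u' = u /\ v' = v) \/ (u' = v /\ v' = u))
  (vertex_cover : forall z : G, (exists w, z = f w) \/
     exists u v, adj u v /\ inner (f u) (f v) (R u v) z)
  (edge_cover : forall a b : G, adj a b -> exists u v, adj u v /\ pedge (R u v) a b).

Lemma R_pedge_oriented u v a b p q : adj u v -> pedge (R u v) p q ->
  a = u \/ a = v -> b = u \/ b = v -> a <> b -> pedge (R a b) p q \/ pedge (R a b) q p.
Proof.
move=> uv Hpq [->|->] [->|->] Nab; try by case: Nab.
- by left.
- by right; rewrite R_rev //; apply/pedge_rev.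
Qed.

Lemma R_In_branch u v w : adj u v -> List.In (f w) (R u v) -> w = u \/ w = v.
Proof.
move=> uv Hw; case: (classic (f w = f u)) => [/f_inj|Nu]; first by left.
case: (classic (f w = f v)) => [/f_inj|Nv]; first by right.
by case: (R_inner_nonbranch uv (conj Hw (conj Nu Nv)) (erefl (f w))).
Qed.

Lemma inner_nonbranch_R u v z : adj u v -> List.In z (R u v) ->
  (forall w, z <> f w) -> inner (f u) (f v) (R u v) z.
Proof. by move=> uv Hz Nb; split=> //; split; apply: Nb. Qed.

Lemma inner_adj_pedge u v z z' : adj u v -> inner (f u) (f v) (R u v) z -> adj z z' ->
  pedge (R u v) z z' \/ pedge (R u v) z' z.
Proof.
move=> uv Hz zz'; have [u' [v' [uv' Hp]]] := edge_cover zz'.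
have Hz' : inner (f u') (f v') (R u' v') z.
  apply: inner_nonbranch_R (proj1 (pedge_In Hp)) _ => // w; exact: R_inner_nonbranch uv Hz.
have Nuv : u <> v by move=> E; subst v; apply: (adj_irrefl uv).
case: (R_inner_unique uv uv' Hz Hz') => [[Eu Ev]|[Eu Ev]]; subst u' v'; first by left.
exact: R_pedge_oriented uv' Hp (or_intror erefl) (or_introl erefl) Nuv.
Qed.

Lemma inner_adj_In u v z z' : adj u v -> inner (f u) (f v) (R u v) z -> adj z z' ->
  List.In z' (R u v).
Proof. by move=> uv Hz zz'; case: (inner_adj_pedge uv Hz zz') => /pedge_In []. Qed.

Lemma adj_inner_branch u v z a : adj u v -> inner (f u) (f v) (R u v) z ->
  adj z (f a) -> a = u \/ a = v.
Proof. by move=> uv Hz za; apply: R_In_branch uv (inner_adj_In uv Hz za). Qed.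

Lemma branch_adj a b : adj (f a) (f b) -> adj a b.
Proof.
move=> ab; have [u [v [uv Hp]]] := edge_cover ab; have [Ia Ib] := pedge_In Hp.
apply: adj_endpoints uv (R_In_branch uv Ia) (R_In_branch uv Ib) _.
by move=> E; subst b; apply: (adj_irrefl ab).
Qed.

Definition branch_of (z : G) : option H :=
  match excluded_middle_informative (exists w, z = f w) with
  | left h => Some (proj1_sig (constructive_indefinite_description _ h))
  | right _ => None
  end.

Lemma branch_of_f w : branch_of (f w) = Some w.
Proof.
rewrite /branch_of; case: excluded_middle_informative => [h|[]]; last by exists w.
by case: constructive_indefinite_description => w' /= /f_inj ->.
Qed.

Lemma branch_of_some z w : branch_of z = Some w -> z = f w.
Proof.
rewrite /branch_of; case: excluded_middle_informative => // h.
by case: constructive_indefinite_description => w' /= -> [->].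
Qed.

Lemma branch_of_nonbranch z : (forall w, z <> f w) -> branch_of z = None.
Proof. by rewrite /branch_of; case: excluded_middle_informative => // [[w /[swap] /(_ w)]]. Qed.

Fixpoint contract (l : list G) : list H :=
  if l is z :: t then
    if branch_of z is Some w then w :: contract t else contract t
  else [::].

Lemma contract_f w l : contract (f w :: l) = w :: contract l.
Proof. by rewrite /= branch_of_f. Qed.

Lemma contract_nonbranch z l : (forall w, z <> f w) -> contract (z :: l) = contract l.
Proof. by move=> Nb; rewrite /= branch_of_nonbranch. Qed.

Lemma contract_In w l : List.In w (contract l) <-> List.In (f w) l.
Proof.
elim: l => [|z l IH] //=; case E: (branch_of z) => [w'|]; rewrite -IH.
- rewrite (branch_of_some E) /=.
  by split=> [[->|Hw]|[/f_inj ->|Hw]]; [left | right | left | right].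
- split=> [|[Ez|//]]; first by right.
  by move: E; rewrite Ez branch_of_f.
Qed.

Lemma contract_app l1 l2 : contract (l1 +++ l2) = contract l1 +++ contract l2.
Proof. by elim: l1 => [|z l IH] //=; case: branch_of => [w|] //=; rewrite IH. Qed.

Lemma contract_NoDup l : List.NoDup l -> List.NoDup (contract l).
Proof.
elim: l => [|z l IH] /= ND; first exact: List.NoDup_nil.
move/List.NoDup_cons_iff: ND => [Nz ND]; case E: (branch_of z) => [w|]; last exact: IH.
apply: List.NoDup_cons; last exact: IH.
by move/contract_In; rewrite -(branch_of_some E).
Qed.

Lemma contract_head_inner u v z T : adj u v -> inner (f u) (f v) (R u v) z ->
  walk (z :: T) -> (exists w, last z T = f w) ->
  exists b rest, contract T = b :: rest /\ (b = u \/ b = v).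
Proof.
move=> uv; elim: T z => [|z' T IH] z Hz W [w Ew].
  by case: (R_inner_nonbranch uv Hz Ew).
have [zz' W'] := proj1 (walk_cons2 _ _ _) W.
have Iz' := inner_adj_In uv Hz zz'.
case: (classic (exists a, z' = f a)) => [[a Ea]|Nb].
  by subst z'; rewrite contract_f; exists a, (contract T); split=> //; apply: R_In_branch.
have Nb' : forall a, z' <> f a by move=> a Ea; apply: Nb; exists a.
rewrite contract_nonbranch //; apply: IH W' _; last by exists w.
exact: inner_nonbranch_R.
Qed.

Lemma contract_walk z T : walk (z :: T) -> List.NoDup (z :: T) ->
  (exists w, last z T = f w) -> walk (contract (z :: T)).
Proof.
elim: T z => [|z' T IH] z W ND Hl.
  by rewrite /=; case: branch_of => [w|]; apply: walk_short.
have [zz' W'] := proj1 (walk_cons2 _ _ _) W.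
have [Nz ND'] := proj1 (List.NoDup_cons_iff _ _) ND.
have IH' := IH z' W' ND' Hl.
case: (classic (exists a, z = f a)) => [[a Ea]|Nb]; last first.
  by rewrite contract_nonbranch // => w Ew; apply: Nb; exists w.
subst z; rewrite contract_f.
case: (classic (exists a', z' = f a')) => [[a' Ea']|Nb'].
  subst z'; rewrite contract_f in IH' *; apply/walk_cons2; split=> //; exact: branch_adj.
have Nb'' : forall w, z' <> f w by move=> w Ew; apply: Nb'; exists w.
have [u [v [uv Hz']]] : exists u v, adj u v /\ inner (f u) (f v) (R u v) z'.
  by case: (vertex_cover z') => // [[w Ew]]; case: (Nb'' w).
have [b [rest [Eb Hb]]] := contract_head_inner uv Hz' W' Hl.
rewrite contract_nonbranch // Eb in IH' *; apply/walk_cons2; split=> //.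
apply: adj_endpoints uv (adj_inner_branch uv Hz' (adj_sym zz')) Hb _.
by move=> Eab; subst b; apply: Nz; right; apply/contract_In; rewrite Eb; left.
Qed.

Lemma contract_start a z T b rest : walk (f a :: z :: T) -> List.NoDup (f a :: z :: T) ->
  (exists w, last z T = f w) -> contract (z :: T) = b :: rest ->
  exists Y, R a b = f a :: z :: Y.
Proof.
move=> W ND Hl Ec; have [az W'] := proj1 (walk_cons2 _ _ _) W.
have [u [v [uv Hp]]] := edge_cover az; have [Ia Iz] := pedge_In Hp.
have Hb : b = u \/ b = v.
  case: (classic (exists c, z = f c)) => [[c Ezc]|Nb].
    by subst z; move: Ec; rewrite contract_f => -[<- _]; apply: R_In_branch uv Iz.
  have Nb' : forall c, z <> f c by move=> c Ezc; apply: Nb; exists c.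
  have [b' [rest' [E' Hb']]] := contract_head_inner uv (inner_nonbranch_R uv Iz Nb') W' Hl.
  by move: Ec; rewrite contract_nonbranch // E' => -[<- _].
have Nab : a <> b.
  move=> Eab; subst b; move/List.NoDup_cons_iff: ND => [+ _]; apply.
  by apply/contract_In; rewrite Ec; left.
have ab := adj_endpoints uv (R_In_branch uv Ia) Hb Nab.
have [[_ [NDR _]] [/nth_error_head [t Et] _]] := R_path ab.
have := R_pedge_oriented uv Hp (R_In_branch uv Ia) Hb Nab.
rewrite Et in NDR * => /(NoDup_pedge_head NDR) [Y ->]; by exists Y.
Qed.

Lemma contract_xy_path u1 u2 S : xy_path (f u1) (f u2) S -> xy_path u1 u2 (contract S).
Proof.
move=> HS; have [[_ [ND W]] [/nth_error_head [T ET] Hl]] := HS.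
have [X EX] := proj1 (nth_error_last_app _ _) Hl.
subst S; move/nth_error_last_cons: Hl => Hl.
split; [split; [|split] | split].
- by rewrite contract_f.
- exact: contract_NoDup.
- by apply: contract_walk => //; exists u2.
- by rewrite contract_f.
- by apply/nth_error_last_app; exists (contract X); rewrite EX contract_app contract_f.
Qed.

Lemma contract_inner u1 u2 S w : w <> u1 -> w <> u2 -> List.In w (contract S) ->
  inner (f u1) (f u2) S (f w).
Proof.
by move=> N1 N2 /contract_In Hw; split=> //; split=> /f_inj.
Qed.

(* The first edge of an [f u1]-[f u2] path is the first edge of the subdivided
   edge [R u1 b] leading to the next branch vertex [b], so the contraction
   determines it. *)
Lemma contract_eq_first_edge u1 u2 S1 S2 : u1 <> u2 ->
  xy_path (f u1) (f u2) S1 -> xy_path (f u1) (f u2) S2 -> contract S1 = contract S2 ->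
  exists z, pedge S1 (f u1) z /\ pedge S2 (f u1) z.
Proof.
move=> N12 H1 H2 Ec.
have Nf : f u1 <> f u2 by move/f_inj.
have [z1 [t1 [E1 L1]]] := xy_path_cons2 H1 Nf.
have [z2 [t2 [E2 L2]]] := xy_path_cons2 H2 Nf.
have [[_ [ND1 W1]] _] := H1; have [[_ [ND2 W2]] _] := H2.
subst S1 S2; rewrite !contract_f in Ec; case: Ec => Ec.
have : List.In u2 (contract (z1 :: t1)).
  by apply/contract_In; rewrite -L1; apply: In_last.
case Eb: (contract (z1 :: t1)) => [|b rest] // _.
have [Y1 R1] := contract_start W1 ND1 (ex_intro _ u2 L1) Eb.
have [Y2 R2] := contract_start W2 ND2 (ex_intro _ u2 L2) (etrans (esym Ec) Eb).
by rewrite R1 in R2; case: R2 => -> _; exists z2; split; exists 0.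
Qed.

Lemma disjoint_path_family_branch_end (l1 l2 : G) S :
  disjoint_path_family l1 l2 S -> l1 <> l2 -> exists w, l1 = f w.
Proof.
move=> [paths [edisj _]] N12; apply: NNPP => Nb.
have [u [v [uv Hl1]]] : exists u v, adj u v /\ inner (f u) (f v) (R u v) l1.
  by case: (vertex_cover l1).
have first_edge i : exists z, pedge (S i) l1 z /\ adj l1 z.
  have [z [t [Ei _]]] := xy_path_cons2 (paths i) N12.
  have Hp : pedge (S i) l1 z by rewrite Ei; exists 0.
  by have [[_ [_ W]] _] := paths i; exists z; split=> //; apply: W.
have distinct i j z z' : i <> j -> pedge (S i) l1 z -> pedge (S j) l1 z' -> z <> z'.
  by move=> Nij Hi Hj Ez; subst z'; apply: (proj1 (edisj i j Nij _ _ Hi)).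
have [z0 [P0 A0]] := first_edge 0; have [z1 [P1 A1]] := first_edge 1.
have [z2 [P2 A2]] := first_edge 2.
have [_ [NDR _]] := proj1 (R_path uv).
case: (NoDup_degree2 NDR (inner_adj_pedge uv Hl1 A0) (inner_adj_pedge uv Hl1 A1)
  (inner_adj_pedge uv Hl1 A2)) => [|[]]; [exact: distinct P0 P1 | exact: distinct P0 P2 |
  exact: distinct P1 P2].
Qed.

Lemma no_disjoint_path_family (l1 l2 : G) S : Pi_graph H -> l1 <> l2 ->
  ~ disjoint_path_family l1 l2 S.
Proof.
move=> [_ PiH] N12 Fam.
have [u1 E1] := disjoint_path_family_branch_end Fam N12.
have [u2 E2] := disjoint_path_family_branch_end (disjoint_path_family_rev Fam) (nesym N12).
subst l1 l2; have [paths [edisj idisj]] := Fam.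
have Nu : u1 <> u2 by move=> E; apply: N12; rewrite E.
apply: (PiH u1 u2 Nu); exists (fun i => contract (S i)); split; [|split].
- by move=> i; apply: contract_xy_path.
- move=> i j Nij Ec; have [z [Hi Hj]] := contract_eq_first_edge Nu (paths i) (paths j) Ec.
  exact: (proj1 (edisj i j Nij _ _ Hi)).
- move=> i j w Nij [Hw [Nw1 Nw2]] Hw'.
  exact: (idisj i j (f w) Nij (contract_inner Nw1 Nw2 Hw) (contract_inner Nw1 Nw2 Hw')).
Qed.

End Subdivision.

Lemma subdivided_Pi_no_disjoint_path_family (G : graph) (l1 l2 : G) S :
  subdivided_Pi_graph G -> l1 <> l2 -> ~ disjoint_path_family l1 l2 S.
Proof.
move=> [H [PiH [f [R [f_inj [R_path [R_rev [Rnb [Runiq [vcov ecov]]]]]]]]]].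
exact: (no_disjoint_path_family f_inj R_path R_rev Rnb Runiq vcov ecov PiH).
Qed.

Lemma path_segment (G : graph) (l : list G) u w : is_path l -> path_le l u w -> u <> w ->
  exists S, xy_path u w S /\ (forall a b, pedge S a b -> pedge l a b) /\
    (forall v, inner u w S v -> path_le l u v /\ path_le l v w).
Proof.
move=> [_ [ND W]] Huw Nuw; have [X [Y [Z El]]] := path_le_split ND Nuw Huw.
have El' : l = X +++ (u :: Y +++ [:: w]) +++ Z by rewrite El /= -List.app_assoc.
have sub_edges a b : pedge (u :: Y +++ [:: w]) a b -> pedge l a b.
  by move=> Hab; rewrite El'; apply: pedge_app.
exists (u :: Y +++ [:: w]); split; [|split] => //.
- split; [split; [|split] | split] => //.
  + by move: ND; rewrite El' => /List.NoDup_app_remove_l /List.NoDup_app_remove_r.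
  + by move=> a b /sub_edges; apply: W.
  + by apply/nth_error_last_app; exists (u :: Y).
- move=> v [Hv [Nvu Nvw]].
  have {Hv} Hv : List.In v Y.
    case: Hv => [E|/(List.in_app_or Y) [//|[E|[]]]]; [by case: Nvu | by case: Nvw].
  have [Y1 [Y2 EY]] := List.in_split _ _ Hv.
  split; first by rewrite El EY -List.app_assoc; apply: path_le_app.
  have -> : l = (X +++ u :: Y1) +++ v :: Y2 +++ w :: Z by rewrite El EY -!List.app_assoc.
  exact: path_le_app.
Qed.

Lemma increasing_final_segment (nk : nat -> nat) : (forall k, nk k < nk k.+1)%N ->
  forall m0, exists m, forall n, (m0 <= nk n)%N <-> (m <= n)%N.
Proof.
move=> incr m0; have mono := leq_mono (homo_ltn ltn_trans incr).
have Hex : exists n, (m0 <= nk n)%N.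
  exists m0; elim: m0 => // n IH; exact: leq_ltn_trans IH (incr n).
exists (ex_minn Hex) => n; case: ex_minnP => m Hm minm.
by split=> [/minm //|mn]; apply: leq_trans Hm _; rewrite mono.
Qed.

Section GrainLine.
Variables (G : graph) (x y : G) (L : G -> Prop) (le : G -> G -> Prop) (P : nat -> list G).
Hypothesis GL : grain_line x y L le P.

Lemma grain_line_linear : linear_order L le.
Proof. by have [_ [_ [? [? [? [? _]]]]]] := GL; split=> //; split=> //; split. Qed.

Lemma grain_line_path n : xy_path x y (P n).
Proof. by have [_ [_ [_ [_ [_ [_ [_ [_ [_ [paths _]]]]]]]]]] := GL. Qed.

Lemma grain_line_edge_disjoint n m : n <> m -> edge_disjoint (P n) (P m).
Proof. by have [_ [_ [_ [_ [_ [_ [_ [_ [_ [_ [edisj _]]]]]]]]]]] := GL; apply: edisj. Qed.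

Lemma grain_line_final v : L v <-> exists m, forall n, List.In v (P n) <-> (m <= n)%N.
Proof. by have [_ [_ [_ [_ [_ [_ [_ [_ [_ [_ [_ [GL1 _]]]]]]]]]]]] := GL. Qed.

Lemma grain_line_private n v : List.In v (P n) -> ~ L v ->
  forall m, m <> n -> ~ List.In v (P m).
Proof. by have [_ [_ [_ [_ [_ [_ [_ [_ [_ [_ [_ [_ [GL2 _]]]]]]]]]]]]] := GL; apply: GL2. Qed.

Lemma grain_line_order n u w : L_lt L P n u -> L_lt L P n w ->
  (le u w <-> path_le (P n) u w).
Proof. by have [_ [_ [_ [_ [_ [_ [_ [_ [_ [_ [_ [_ [_ GL3]]]]]]]]]]]]] := GL; apply: GL3. Qed.

Lemma grain_line_L_lt_eventually v : L v -> exists m, forall n, (m <= n)%N -> L_lt L P n v.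
Proof.
move=> Lv; have [m Hm] := proj1 (grain_line_final v) Lv.
by exists m.+1 => n Hn; split=> //; exists m; split=> //; apply/Hm.
Qed.

Lemma grain_line_shared_between a b l1 l2 v : (a < b)%N -> List.In v (P a) ->
  L_lt L P b l1 -> L_lt L P b l2 -> path_le (P b) l1 v -> path_le (P b) v l2 ->
  L v /\ le l1 v /\ le v l2.
Proof.
move=> ab Hva H1 H2 l1v vl2.
have Lv : L v.
  apply: NNPP => NLv; apply: (grain_line_private Hva NLv (m := b)); first lia.
  exact: (proj2 (path_le_In l1v)).
have Hv : L_lt L P b v by split=> //; exists a.
by split=> //; split; [apply/(grain_line_order H1 Hv) | apply/(grain_line_order Hv H2)].
Qed.

Lemma grain_line_subsequence (nk : nat -> nat) : (forall k, nk k < nk k.+1)%N ->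
  grain_line x y L le (fun k => P (nk k)).
Proof.
move=> incr; have mono := leq_mono (homo_ltn ltn_trans incr).
have inj := incn_inj mono; have lt_mono := leqW_mono mono.
have [Nxy [Cnt [Refl [Anti [Trans [Tot [Lx [Ly [Ext [Paths [ED [GL1 [GL2 GL3]]]]]]]]]]]]] := GL.
do 9 (split=> //); split; first by move=> n; apply: Paths.
split; first by move=> n m Nnm; apply: ED => /inj.
split; [|split].
- move=> v; split=> [/GL1 [m0 M0]|[m Hm]].
    by have [m Hm] := increasing_final_segment incr m0; exists m => n; rewrite -Hm; apply: M0.
  apply: NNPP => NLv; apply: (GL2 (nk m) v (proj2 (Hm m) (leqnn m)) NLv (nk m.+1)).
    by move=> E; have := incr m; rewrite E ltnn.
  exact/Hm.
- by move=> n v Hv NLv m Nmn; apply: (GL2 _ _ Hv NLv) => /inj.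
- move=> n u w [Lu [k [kn Hu]]] [Lw [k' [k'n Hw]]].
  by apply: GL3; split=> //; [exists (nk k) | exists (nk k')]; rewrite lt_mono.
Qed.

End GrainLine.

Lemma grain_line_dense (G : graph) (x y : G) L le P :
  subdivided_Pi_graph G -> grain_line x y L le P -> dense_order L le.
Proof.
move=> HG GL l1 l2 L1 L2 l12 N12; apply: NNPP => Nbetween.
have [m1 M1] := grain_line_L_lt_eventually GL L1.
have [m2 M2] := grain_line_L_lt_eventually GL L2.
pose n0 := maxn m1 m2.
pose segment_of N S := xy_path l1 l2 S /\ (forall a b, pedge S a b -> pedge (P N) a b) /\
  (forall v, inner l1 l2 S v -> path_le (P N) l1 v /\ path_le (P N) v l2).
pose Seg N := epsilon (inhabits [::]) (segment_of N).
have SegP i : segment_of (n0 + i) (Seg (n0 + i)).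
  apply: (epsilon_spec (inhabits [::]) (segment_of (n0 + i))).
  have [H1 H2] : L_lt L P (n0 + i) l1 /\ L_lt L P (n0 + i) l2.
    by split; [apply: M1 | apply: M2]; lia.
  apply: path_segment N12; first exact: (proj1 (grain_line_path GL _)).
  exact/(grain_line_order GL H1 H2).
apply: (subdivided_Pi_no_disjoint_path_family (S := fun i => Seg (n0 + i)) HG N12).
split; [|split].
- by move=> i; case: (SegP i).
- move=> i j Nij a b Hab; have [_ [Ei _]] := SegP i; have [_ [Ej _]] := SegP j.
  have Nij' : n0 + i <> n0 + j by lia.
  have [Nab Nba] := grain_line_edge_disjoint GL Nij' (Ei _ _ Hab).
  by split=> /Ej.
have disj i j v : (i < j)%N -> inner l1 l2 (Seg (n0 + i)) v -> ~ inner l1 l2 (Seg (n0 + j)) v.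
  move=> ij Hi Hj; have [_ [_ Bi]] := SegP i; have [_ [_ Bj]] := SegP j.
  have [l1v vl2] := Bj v Hj.
  have [Lv [le1 le2]] := grain_line_shared_between GL (a := n0 + i) (b := n0 + j) ltac:(lia)
    (proj2 (path_le_In (proj1 (Bi v Hi)))) (M1 (n0 + j) ltac:(lia)) (M2 (n0 + j) ltac:(lia))
    l1v vl2.
  by case: Hj => _ [Nv1 Nv2]; apply: Nbetween; exists v; split=> //; split=> //;
    split; [apply: nesym | split].
move=> i j v Nij; case: (ltngtP i j) => [ij|ji|E] //; first exact: disj.
by move=> Hi Hj; apply: (disj j i v ji Hj Hi).
Qed.

Section WildPresentation.
Variables (G : graph) (x y : G) (L : G -> Prop) (le : G -> G -> Prop) (P : nat -> list G).
Hypotheses (GL : grain_line x y L le P) (dense : dense_order L le).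

Definition between_on N l1 l2 := exists l, path_le (P N) l1 l /\ path_le (P N) l l2 /\
  L l /\ le l1 l /\ l1 <> l /\ le l l2 /\ l <> l2.

Definition separates N m := forall l1 l2, L_lt L P m.+1 l1 -> L_lt L P m.+1 l2 ->
  le l1 l2 -> l1 <> l2 -> between_on N l1 l2.

Definition prefix_vertices m := List.flat_map P (List.seq 0 m.+1).

Lemma between_eventually l1 l2 : L l1 -> L l2 -> le l1 l2 -> l1 <> l2 ->
  exists N0, forall N, (N0 <= N)%N -> between_on N l1 l2.
Proof.
move=> L1 L2 l12 N12; have [c [Lc [l1c [N1c [cl2 Nc2]]]]] := dense L1 L2 l12 N12.
have [m1 M1] := grain_line_L_lt_eventually GL L1.
have [m2 M2] := grain_line_L_lt_eventually GL L2.
have [mc Mc] := grain_line_L_lt_eventually GL Lc.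
exists (maxn m1 (maxn m2 mc)) => N HN; exists c.
have [H1 H2 Hc] : [/\ L_lt L P N l1, L_lt L P N l2 & L_lt L P N c] by split;
  [apply: M1 | apply: M2 | apply: Mc]; lia.
split; first exact/(grain_line_order GL H1 Hc).
by split; first exact/(grain_line_order GL Hc H2).
Qed.

Lemma separates_eventually m : exists N0, forall N, (N0 <= N)%N -> separates N m.
Proof.
have pair_eventually l1 l2 : exists N0, forall N, (N0 <= N)%N ->
    L l1 -> L l2 -> le l1 l2 -> l1 <> l2 -> between_on N l1 l2.
  case: (classic (L l1 /\ L l2 /\ le l1 l2 /\ l1 <> l2)) => [[L1 [L2 [l12 N12]]]|Nc].
    by have [N0 HN0] := between_eventually L1 L2 l12 N12; exists N0 => N HN _ _ _ _; apply: HN0.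
  by exists 0 => N _ L1 L2 l12 N12; case: Nc.
have [N0 HN0] := eventually_all (l := prefix_vertices m)
  (Q := fun l1 N => forall l2, List.In l2 (prefix_vertices m) ->
     L l1 -> L l2 -> le l1 l2 -> l1 <> l2 -> between_on N l1 l2)
  (fun l1 _ => eventually_all (fun l2 _ => pair_eventually l1 l2)).
exists N0 => N HN l1 l2 [L1 [i [im I1]]] [L2 [j [jm I2]]].
by apply: HN0 => //; apply/List.in_flat_map; [exists i | exists j];
  split=> //; apply/List.in_seq; lia.
Qed.

Definition next_separating m : nat :=
  epsilon (inhabits 0) (fun N => (m < N)%N /\ separates N m).

Lemma next_separating_spec m : (m < next_separating m)%N /\ separates (next_separating m) m.
Proof.
apply: (epsilon_spec (inhabits 0) (fun N => (m < N)%N /\ separates N m)).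
have [N0 HN0] := separates_eventually m.
by exists (maxn N0 m.+1); split; [lia | apply: HN0; lia].
Qed.

Fixpoint separating_index k : nat :=
  if k is k'.+1 then next_separating (separating_index k') else 0.

Lemma separating_index_increasing k : (separating_index k < separating_index k.+1)%N.
Proof. exact: (next_separating_spec _).1. Qed.

Lemma separating_subsequence_wildly_presented :
  wildly_presented L le (fun k => P (separating_index k)).
Proof.
have mono := leq_mono (homo_ltn ltn_trans separating_index_increasing).
move=> [|n] l1 l2 [L1 [k [kn I1]]] [L2 [k' [k'n I2]]] //.
apply: (next_separating_spec _).2 => //; split=> //;
  [exists (separating_index k) | exists (separating_index k')];
  by split=> //; rewrite ltnS mono -ltnS.
Qed.

End WildPresentation.

Lemma rat_unit_interval_linear :
  linear_order (fun q : rat => (0 <= q)%R /\ (q <= 1)%R) (fun a b => (a <= b)%R).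
Proof.
split; [|split; [|split]].
- by move=> u _; exact: lexx.
- by move=> u v _ _ uv vu; apply/le_anti; rewrite uv vu.
- by move=> u v w _ _ _; exact: le_trans.
- by move=> u v _ _; case/orP: (le_total u v); auto.
Qed.

Lemma rat_unit_interval_dense :
  dense_order (fun q : rat => (0 <= q)%R /\ (q <= 1)%R) (fun a b => (a <= b)%R).
Proof.
move=> a b [a0 a1] [b0 b1] ab Nab.
have lt_ab : (a < b)%R by rewrite lt_neqAle ab andbT; apply/eqP.
have [am mb] := midf_lt lt_ab.
exists ((a + b) / 2)%R; split.
  by split; [apply: le_trans a0 (ltW am) | apply: le_trans (ltW mb) b1].
split; first exact: ltW.
split; first by move=> E; rewrite -E ltxx in am.
by split; [exact: ltW | move=> E; rewrite E ltxx in mb].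
Qed.

Lemma grain_line_wild (G : graph) (x y : G) L le P :
  grain_line x y L le P -> dense_order L le -> wild L le.
Proof.
move=> GL dense; have [Nxy [[code code_inj] [_ [_ [_ [_ [Lx [Ly [bounds _]]]]]]]]] := GL.
have N01 : (0 : rat) <> 1%R by move=> /esym/eqP; rewrite oner_eq0.
have [f [Df [onto iso]]] := countable_dense_order_iso (grain_line_linear GL)
  rat_unit_interval_linear dense rat_unit_interval_dense Lx Ly
  (conj (lexx 0%R) ler01) (conj ler01 (lexx 1%R)) bounds
  (fun b (Db : (0 <= b)%R /\ (b <= 1)%R) => Db) Nxy N01 code_inj
  (fun u v _ _ E => pcan_inj (@pickleK rat) E).
by exists f; split=> //; split=> // q q0 q1; apply: onto.
Qed.

Theorem lemma5p5 (G : graph) (HG : subdivided_Pi_graph G)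
  (x y : G) (L : G -> Prop) (le : G -> G -> Prop) (P : nat -> list G) :
  grain_line x y L le P ->
  wild L le /\
  exists nk : nat -> nat, (forall k, (nk k < nk k.+1)%N) /\
    grain_line x y L le (fun k => P (nk k)) /\
    wildly_presented L le (fun k => P (nk k)).
Proof.
move=> GL; have dense := grain_line_dense HG GL.
split; first exact: grain_line_wild GL dense.
exists (separating_index L le P).
have incr := separating_index_increasing GL dense.
split=> //; split; first exact: grain_line_subsequence.
exact: separating_subsequence_wildly_presented GL dense.
Qed.
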